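(* Let $S$ be a partial semigroup. (i) If $I$ is a two-sided ideal in $S$ such that $S$ is $I$-directed, then $\{\mathcal{U}\in\gamma S: I\in\mathcal{U}\}$ is a compact two-sided ideal in $\gamma S$. (ii) If $E$ is a right ideal in $S$ such that $S$ is $E$-directed, then $\{\mathcal{U}\in\gamma S: E\in\mathcal{U}\}$ is a compact right ideal in $\gamma S$.
   Context: Partial semigroup: partial operation with $(rs)t$ defined iff $r(st)$ defined, then equal. For $A\subseteq S$, $S$ is $A$-directed if for all $x_1,\dots,x_n\in S$ there is $x\in A$ with all $x_ix$ defined. A two-sided ideal in $S$ is a non-empty $I\subseteq S$ with $xy\in I$ whenever $xy$ is defined and $x\in I$ or $y\in I$; a right ideal is a non-empty $E\subseteq S$ with $xy\in E$ whenever $xy$ is defined and $x\in E$. $\gamma S$ is the set of ultrafilters $\mathcal{U}$ on $S$ with $\{t:st\text{ defined}\}\in\mathcal{U}$ for each $s\in S$, with the Stone (Čech–Stone) topology and the semigroup operation $A\in\mathcal{U}*\mathcal{V}$ iff $\{s:\{t: st\text{ defined and } st\in A\}\in\mathcal{V}\}\in\mathcal{U}$. *)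

From Stdlib Require Import List.
Set Implicit Arguments.

Section PartialSemigroup.
Variable S : Type.
Variable op : S -> S -> option S.

Definition defined (s t : S) : Prop := op s t <> None.

(* (rs)t defined iff r(st) defined, and then equal *)
Definition psg_assoc : Prop :=
  forall r s t : S,
    match op r s with Some x => op x t | None => None end =
    match op s t with Some y => op r y | None => None end.

Definition directed (A : S -> Prop) : Prop :=
  forall xs : list S, exists x, A x /\ forall y, In y xs -> defined y x.

Definition two_sided_ideal (I : S -> Prop) : Prop :=
  (exists x, I x) /\
  forall x y z, op x y = Some z -> (I x \/ I y) -> I z.

Definition right_ideal (E : S -> Prop) : Prop :=
  (exists x, E x) /\
  forall x y z, op x y = Some z -> E x -> E z.

Definition ultrafilter (U : (S -> Prop) -> Prop) : Prop :=
  U (fun _ => True) /\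
  ~ U (fun _ => False) /\
  (forall A B : S -> Prop, U A -> (forall x, A x -> B x) -> U B) /\
  (forall A B : S -> Prop, U A -> U B -> U (fun x => A x /\ B x)) /\
  (forall A : S -> Prop, U A \/ U (fun x => ~ A x)).

Definition gammaS (U : (S -> Prop) -> Prop) : Prop :=
  ultrafilter U /\ forall s : S, U (fun t => defined s t).

Definition uprod (U V : (S -> Prop) -> Prop) : (S -> Prop) -> Prop :=
  fun A => U (fun s => V (fun t => exists z, op s t = Some z /\ A z)).

(* Stone topology on gamma S: basic open sets {U in gamma S : A in U} *)
Definition gopen (O : ((S -> Prop) -> Prop) -> Prop) : Prop :=
  forall U, gammaS U -> O U ->
    exists A, U A /\ forall V, gammaS V -> V A -> O V.

Definition gcompact (K : ((S -> Prop) -> Prop) -> Prop) : Prop :=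
  forall (iota : Type) (O : iota -> ((S -> Prop) -> Prop) -> Prop),
    (forall i, gopen (O i)) ->
    (forall U, K U -> exists i, O i U) ->
    exists l : list iota, forall U, K U -> exists i, In i l /\ O i U.

Definition gtwo_sided_ideal (K : ((S -> Prop) -> Prop) -> Prop) : Prop :=
  (exists U, K U) /\ (forall U, K U -> gammaS U) /\
  forall U V, gammaS U -> gammaS V -> (K U \/ K V) -> K (uprod U V).

Definition gright_ideal (K : ((S -> Prop) -> Prop) -> Prop) : Prop :=
  (exists U, K U) /\ (forall U, K U -> gammaS U) /\
  forall U V, gammaS U -> gammaS V -> K U -> K (uprod U V).

Definition hat (A : S -> Prop) : ((S -> Prop) -> Prop) -> Prop :=
  fun U => gammaS U /\ U A.

End PartialSemigroup.

From Stdlib Require Import List.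
From mathcomp Require Import all_boot.
From mathcomp Require Import boolp classical_sets filter.

(* Every set [hat A] is compact: a cover of it by open sets without a finite
   subcover makes the family consisting of [A], the sets [defined s], and the
   complements of the basic sets inside members of the cover have the finite
   intersection property, and an ultrafilter containing that family is a point
   of [hat A] outside every member of the cover.  If [S] is [A]-directed, the
   family of [A] and the sets [defined s] has the finite intersection property,
   so [hat A] is nonempty.  Finally, [gammaS] is closed under [uprod] by
   associativity, and since [s t] is defined for [V]-almost all [t], a set
   absorbing products on the right (resp. left) that belongs to [U]
   (resp. [V]) belongs to [uprod U V]. *)

Set Implicit Arguments.
Unset Strict Implicit.

Section Ultrafilter.
Variables (T : Type) (U : (T -> Prop) -> Prop).
Hypothesis UU : ultrafilter U.

Lemma ultrafilterT : U (fun _ => True).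
Proof. by case: UU. Qed.

Lemma ultrafilterS (A B : T -> Prop) : U A -> (forall x, A x -> B x) -> U B.
Proof. by case: UU => _ [_ [US _]]; apply: US. Qed.

Lemma ultrafilterI (A B : T -> Prop) : U A -> U B -> U (fun x => A x /\ B x).
Proof. by case: UU => _ [_ [_ [UI _]]]; apply: UI. Qed.

Lemma ultrafilterS2 (A B C : T -> Prop) :
  U A -> U B -> (forall x, A x -> B x -> C x) -> U C.
Proof. by move=> UA UB ABC; apply: (ultrafilterS (ultrafilterI UA UB)) => x [/ABC]. Qed.

Lemma ultrafilter_ex (A : T -> Prop) : U A -> exists x, A x.
Proof.
move=> UA; apply: contrapT => /forallNP nA.
by case: UU => _ [U0 _]; apply/U0/(ultrafilterS UA).
Qed.

Lemma ultrafilterNP (A : T -> Prop) : U (fun x => ~ A x) <-> ~ U A.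
Proof.
split=> [UnA UA | nUA].
  by have [x []] := ultrafilter_ex (ultrafilterI UA UnA).
by case: UU => _ [_ [_ [_ /(_ A) []]]].
Qed.

Lemma ultrafilter_bigI (J : Type) (G : J -> T -> Prop) (l : list J) :
  (forall j, In j l -> U (G j)) -> U (fun x => forall j, In j l -> G j x).
Proof.
elim: l => [_ | j l IHl Gl].
  by apply: (ultrafilterS ultrafilterT) => x _ j [].
apply: (ultrafilterS2 (Gl j (or_introl erefl)) (IHl (fun k kl => Gl k (or_intror kl)))).
by move=> x Gjx Glx k [<- | kl]; [exact: Gjx | exact: Glx].
Qed.

End Ultrafilter.

Lemma ultrafilter_extend (T J : Type) (G : J -> T -> Prop) :
  (forall l : list J, exists x, forall j, In j l -> G j x) ->
  exists U, ultrafilter U /\ forall j, U (G j).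
Proof.
move=> fipG.
pose F : set_system T :=
  fun A => exists l, forall x, (forall j, In j l -> G j x) -> A x.
have FF : ProperFilter F.
  apply: Build_ProperFilter_ex.
    by move=> A [l lA]; have [x Gx] := fipG l; exists x; apply: lA.
  split.
  - by exists nil.
  - move=> A B [l1 A1] [l2 B2]; exists (l1 ++ l2) => x Gx.
    by split; [apply: A1 | apply: B2] => j jl; apply/Gx/in_or_app; tauto.
  - by move=> A B AB [l lA]; exists l => x /lA /AB.
have [U [UU FU]] := ultraFilterLemma FF.
exists U; split; last by move=> j; apply: FU; exists [:: j] => x; apply; left.
split; first exact: filterT.
split; first exact: filter_not_empty.
split; first by move=> A B UA AB; apply: filterS UA.
split; first by move=> A B; apply: filterI.
by move=> A; apply: in_ultra_setVsetC.
Qed.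

Section PartialSemigroup.
Variables (S : Type) (op : S -> S -> option S).

Lemma defined_Some (s t : S) : defined op s t -> exists z, op s t = Some z.
Proof. by rewrite /defined; case: (op s t) => [z _ | //]; exists z. Qed.

Lemma uprod_ultrafilter U V :
  ultrafilter U -> gammaS op V -> ultrafilter (uprod op U V).
Proof.
move=> UU [VU VD]; rewrite /uprod.
split; [|split; [|split; [|split]]].
- apply: (ultrafilterS UU (ultrafilterT UU)) => s _.
  by apply: (ultrafilterS VU (VD s)) => t /defined_Some [z st]; exists z.
- by case/(ultrafilter_ex UU) => s /(ultrafilter_ex VU) [t [z []]].
- move=> A B UA AB; apply: (ultrafilterS UU UA) => s VA.
  by apply: (ultrafilterS VU VA) => t [z [st Az]]; exists z; split; last exact: AB.
- move=> A B UA UB; apply: (ultrafilterS2 UU UA UB) => s VA VB.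
  by apply: (ultrafilterS2 VU VA VB) => t [z [-> Az]] [_ [[<-] Bz]]; exists z.
- move=> A; case: (pselect (uprod op U V A)) => [| /(ultrafilterNP UU) UnA];
    [by left | right].
  apply: (ultrafilterS UU UnA) => s /(ultrafilterNP VU) VnA.
  apply: (ultrafilterS2 VU VnA (VD s)) => t nA /defined_Some [z st].
  by exists z; split=> // Az; apply: nA; exists z.
Qed.

Lemma uprod_meml U V (A : S -> Prop) :
  (forall s t z, op s t = Some z -> A s -> A z) ->
  ultrafilter U -> gammaS op V -> U A -> uprod op U V A.
Proof.
move=> absA UU [VU VD] UA; apply: (ultrafilterS UU UA) => s As.
apply: (ultrafilterS VU (VD s)) => t /defined_Some [z st].
by exists z; split; last exact: absA st As.
Qed.

Lemma uprod_memr U V (A : S -> Prop) :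
  (forall s t z, op s t = Some z -> A t -> A z) ->
  ultrafilter U -> gammaS op V -> V A -> uprod op U V A.
Proof.
move=> absA UU [VU VD] VA; apply: (ultrafilterS UU (ultrafilterT UU)) => s _.
apply: (ultrafilterS2 VU (VD s) VA) => t /defined_Some [z st] At.
by exists z; split; last exact: absA st At.
Qed.

Lemma hat_extend (A : S -> Prop) (J : Type) (G : J -> S -> Prop) :
  (forall (l : list J) (xs : list S), exists x,
     [/\ A x, forall j, In j l -> G j x & forall s, In s xs -> defined op s x]) ->
  exists U, hat op A U /\ forall j, U (G j).
Proof.
move=> fipG.
pose G' (k : option J + S) :=
  match k with inl (Some j) => G j | inl None => A | inr s => defined op s end.
have [|U [UU UG']] := @ultrafilter_extend S _ G'.
  move=> l; pose js := flat_map (fun k => if k is inl (Some j) then [:: j] else [::]) l.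
  pose xs := flat_map (fun k => if k is inr s then [:: s] else [::]) l.
  have [x [Ax Gx Dx]] := fipG js xs; exists x => -[[j|]|s] kl //=;
    [apply: Gx | apply: Dx]; by apply/in_flat_map; eexists; split; [exact: kl | left].
exists U; split=> [|j]; last exact: UG' (inl (Some j)).
by split; [split=> // s; exact: UG' (inr s) | exact: UG' (inl None)].
Qed.

Lemma hat_nonempty (A : S -> Prop) : directed op A -> exists U, hat op A U.
Proof.
move=> dirA; have [|U [hatU _]] := @hat_extend A False (fun _ _ => True).
  by move=> l xs; have [x [Ax Dx]] := dirA xs; exists x.
by exists U.
Qed.

Lemma hat_gcompact (A : S -> Prop) : gcompact op (hat op A).
Proof.
move=> iota O openO coverO; apply: contrapT => noFinSub.
have avoid l : exists U, hat op A U /\ forall i, In i l -> ~ O i U.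
  apply: contrapT => /forallNP noU; apply: noFinSub; exists l => U hatU.
  apply: contrapT => /forallNP noi; apply: (noU U); split=> // i il Oi.
  exact: (noi i).
pose K := {p : iota * (S -> Prop) | forall V, gammaS op V -> V p.2 -> O p.1 V}.
have [|U [[gU UA] UnB]] := @hat_extend A K (fun k x => ~ (sval k).2 x).
  move=> ks xs; have [W [[[WU WD] WA] WnO]] := avoid (map (fun k => (sval k).1) ks).
  have WnB k : In k ks -> W (fun x => ~ (sval k).2 x).
    move=> kks; apply/(ultrafilterNP WU) => WB.
    apply: (WnO (sval k).1); first exact: (in_map (fun k : K => (sval k).1)).
    exact: (svalP k) (conj WU WD) WB.
  have Wks := ultrafilter_bigI WU WnB.
  have Wxs := ultrafilter_bigI WU (fun s (_ : In s xs) => WD s).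
  have [x [[Ax ksx] xsx]] :=
    ultrafilter_ex WU (ultrafilterI WU (ultrafilterI WU WA Wks) Wxs).
  by exists x.
have [i Oi] := coverO U (conj gU UA).
have [B [UB BO]] := openO i U gU Oi.
exact: ((ultrafilterNP (proj1 gU) B).1 (UnB (exist _ (i, B) BO : K)) UB).
Qed.

Section Associativity.
Hypothesis assoc : psg_assoc op.

Lemma uprod_defined U V s :
  gammaS op U -> gammaS op V -> uprod op U V (defined op s).
Proof.
move=> [UU UD] [VU VD]; apply: (ultrafilterS UU (UD s)) => r /defined_Some [x sr].
apply: (ultrafilterS VU (VD x)) => t xt.
have := assoc s r t; rewrite sr; case: (op r t) => [y | ] E.
  by exists y; split; rewrite // /defined -E.
by case: xt.
Qed.

Lemma gammaS_uprod U V : gammaS op U -> gammaS op V -> gammaS op (uprod op U V).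
Proof.
move=> gU gV; split; first exact: uprod_ultrafilter (proj1 gU) gV.
by move=> s; apply: uprod_defined.
Qed.

Lemma hat_gright_ideal (E : S -> Prop) :
  right_ideal op E -> directed op E -> gright_ideal op (hat op E).
Proof.
move=> [_ absE] dirE; split; first exact: hat_nonempty.
split=> [U [] // | U V gU gV [_ UE]].
by split; [exact: gammaS_uprod | exact: uprod_meml absE (proj1 gU) gV UE].
Qed.

Lemma hat_gtwo_sided_ideal (I : S -> Prop) :
  two_sided_ideal op I -> directed op I -> gtwo_sided_ideal op (hat op I).
Proof.
move=> [_ absI] dirI; split; first exact: hat_nonempty.
split=> [U [] // | U V gU gV UVI].
split; first exact: gammaS_uprod.
case: UVI => -[_ UVI].
  by apply: uprod_meml (proj1 gU) gV UVI => s t z st Is; apply: absI st (or_introl Is).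
by apply: uprod_memr (proj1 gU) gV UVI => s t z st It; apply: absI st (or_intror It).
Qed.

End Associativity.

End PartialSemigroup.

Theorem lemma4p2 (S : Type) (op : S -> S -> option S) (Hassoc : psg_assoc op) :
  (forall I : S -> Prop, two_sided_ideal op I -> directed op I ->
     gtwo_sided_ideal op (hat op I) /\ gcompact op (hat op I)) /\
  (forall E : S -> Prop, right_ideal op E -> directed op E ->
     gright_ideal op (hat op E) /\ gcompact op (hat op E)).
Proof.
split=> [I idI dirI | E idE dirE].
  by split; [exact: (hat_gtwo_sided_ideal Hassoc idI dirI) | exact: hat_gcompact].
by split; [exact: (hat_gright_ideal Hassoc idE dirE) | exact: hat_gcompact].
Qed.
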